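(* $\mathrm{1QFA}/n\neq\mathrm{1QFA}/Rn$.
   Context: A 1qfa is a one-way measure-many quantum finite automaton. For equal-length strings $x,y$, $\genfrac{[}{]}{0pt}{}{x}{y}$ is the two-track string with $x$ on the upper track and $y$ on the lower track. $\mathrm{1QFA}/n$ is the family of languages $L$ for which there exist a 1qfa $M$, $\varepsilon\in[0,1/2)$ and a deterministic advice function $h:\mathbb{N}\to\Gamma^*$ with $|h(n)|=n$ such that $M$ on $\genfrac{[}{]}{0pt}{}{x}{h(|x|)}$ outputs $L(x)$ with probability at least $1-\varepsilon$ for every $x$. $\mathrm{1QFA}/Rn$ is defined analogously with randomized advice, i.e. a probability ensemble $\{D_n\}$ ($D_n$ a distribution on $\Gamma^n$), where $M$ on $\genfrac{[}{]}{0pt}{}{x}{y}$ with $y\sim D_n$ outputs $L(x)$ with probability at least $1-\varepsilon$. *)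

From HB Require Import structures.
From mathcomp Require Import all_boot all_order all_algebra.
From mathcomp Require Import complex.
From mathcomp Require Import Rstruct.
Set Implicit Arguments. Unset Strict Implicit. Unset Printing Implicit Defensive.
Import Order.TTheory GRing.Theory Num.Theory.
Local Open Scope ring_scope.

Notation RR := Rdefinitions.R.
Notation CC := (RR[i]).

Definition sqmod (z : CC) : RR := complex.Re z ^+ 2 + complex.Im z ^+ 2.

Definition adjmx k (U : 'M[CC]_k) : 'M[CC]_k := (map_mx (@conjc RR) U)^T.

Definition unitary k (U : 'M[CC]_k) : Prop := U *m adjmx U = 1%:M.

(* A measure-many one-way quantum finite automaton (Kondacs-Watrous) over
   input alphabet A, with k inner states 'I_k, initial state q0, halting
   accepting / rejecting state sets, and a time-evolution matrix for each
   tape symbol: the left endmarker (Ucent), the right endmarker (Udollar)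
   and each input symbol (Usym a). *)
Record qfa (A : Type) := QFA {
  qfa_k : nat;
  qfa_q0 : 'I_qfa_k;
  qfa_Ucent : 'M[CC]_qfa_k;
  qfa_Udollar : 'M[CC]_qfa_k;
  qfa_Usym : A -> 'M[CC]_qfa_k;
  qfa_acc : {set 'I_qfa_k};
  qfa_rej : {set 'I_qfa_k}
}.

Definition qfa_wf A (M : qfa A) : Prop :=
  [/\ unitary (qfa_Ucent M), unitary (qfa_Udollar M),
      (forall a, unitary (qfa_Usym M a)) & [disjoint qfa_acc M & qfa_rej M]].

Section Run.
Variables (A : Type) (M : qfa A).
Local Notation k := (qfa_k M).

Definition projS (S : {set 'I_k}) (v : 'cV[CC]_k) : 'cV[CC]_k :=
  \col_i (if i \in S then v i 0 else 0).

Definition sqnorm (v : 'cV[CC]_k) : RR := \sum_i sqmod (v i 0).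

Definition qfa_non : {set 'I_k} := ~: (qfa_acc M :|: qfa_rej M).

(* One step: apply U to the (unnormalized) non-halting part, then measure
   with respect to the acc / rej / non-halting decomposition; accumulate
   the accept and reject probabilities. *)
Definition qfa_step (st : 'cV[CC]_k * RR * RR) (U : 'M[CC]_k)
  : 'cV[CC]_k * RR * RR :=
  let: (psi, pa, pr) := st in
  let phi := U *m psi in
  (projS qfa_non phi, pa + sqnorm (projS (qfa_acc M) phi),
                      pr + sqnorm (projS (qfa_rej M) phi)).

Definition qfa_init : 'cV[CC]_k := \col_i (i == qfa_q0 M)%:R.

Definition qfa_run (w : seq A) : 'cV[CC]_k * RR * RR :=
  foldl qfa_step (qfa_init, 0, 0)
    (qfa_Ucent M :: rcons (map (qfa_Usym M) w) (qfa_Udollar M)).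

Definition acc_prob (w : seq A) : RR := (qfa_run w).1.2.
Definition rej_prob (w : seq A) : RR := (qfa_run w).2.

Definition out_prob (b : bool) (w : seq A) : RR :=
  if b then acc_prob w else rej_prob w.
End Run.

Definition track2 (S G : Type) (x : seq S) (y : seq G) : seq (S * G) := zip x y.

Definition in_1QFA_n (S : finType) (L : pred (seq S)) : Prop :=
  exists (G : finType) (M : qfa (S * G)) (eps : RR) (h : forall n, n.-tuple G),
    [/\ qfa_wf M, 0 <= eps, eps < 1/2 &
        forall x : seq S, out_prob M (L x) (track2 x (h (size x))) >= 1 - eps].

Definition in_1QFA_Rn (S : finType) (L : pred (seq S)) : Prop :=
  exists (G : finType) (M : qfa (S * G)) (eps : RR)
         (D : forall n, {ffun n.-tuple G -> RR}),
    [/\ qfa_wf M, 0 <= eps, eps < 1/2,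
        forall n, (forall y, 0 <= D n y) /\ \sum_y D n y = 1 &
        forall x : seq S,
          \sum_(y : (size x).-tuple G) D (size x) y * out_prob M (L x) (track2 x y)
            >= 1 - eps].

From HB Require Import structures.
From mathcomp Require Import all_boot all_order all_algebra.
From mathcomp Require Import complex Rstruct ring lra zify fingroup perm.
Set Implicit Arguments. Unset Strict Implicit. Unset Printing Implicit Defensive.
Import Order.TTheory GRing.Theory Num.Theory.
Local Open Scope ring_scope.
Local Open Scope complex_scope.

(* With deterministic advice the advice string for length 2m is fixed, so on
   inputs u v with |u| = |v| = m the run factors through the configuration
   reached after u.  Discretising these configurations at a scale depending only
   on the automaton and on eps gives fewer cells than the 2^m words u, so two
   words u <> u' reach nearby configurations.  Acceptance probability is
   Lipschitz in the configuration, hence uu (in the language) and u'u (not in it)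
   are accepted with nearly the same probability: impossible with error < 1/2.

   With randomized advice t ++ -t, t uniform in Z_3^(n/2), a reversible automaton
   computes sum_j t_j (x_j - x'_j) in Z_3 (x' the second half of x) and accepts
   iff it is 0.  This always holds when the halves agree; otherwise it is a
   nonzero linear form in t, which vanishes with probability exactly 1/3. *)

Lemma sqmod_ge0 (z : CC) : 0 <= sqmod z.
Proof. by rewrite /sqmod addr_ge0 // sqr_ge0. Qed.

Lemma mul_conjc_sqmod (z : CC) : conjc z * z = (sqmod z)%:C.
Proof.
case: z => a b; rewrite /sqmod /=; apply/eqP; rewrite eq_complex /=.
by rewrite !expr2; apply/andP; split; apply/eqP; ring.
Qed.

Lemma sqmod0 : sqmod 0 = 0.
Proof. by rewrite /sqmod /= expr0n addr0. Qed.

Lemma sqmod1 : sqmod 1 = 1.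
Proof. by rewrite /sqmod /= expr0n addr0 expr1n. Qed.

Lemma sqmodD_le (x y : CC) : sqmod (x + y) <= 2 * sqmod x + 2 * sqmod y.
Proof.
case: x y => a b [c d]; rewrite /sqmod /=.
have := sqr_ge0 (a - c); have := sqr_ge0 (b - d); rewrite !expr2 => *; nra.
Qed.

(* AM-GM, in a square-root-free form that sums over coordinates and along a run. *)
Lemma sqmodB_le (l : RR) (x y : CC) :
  2 * l * (sqmod x - sqmod y) <= sqmod (x - y) + l ^+ 2 * sqmod (x + y).
Proof.
case: x y => a b [c d]; rewrite /sqmod /=.
have := sqr_ge0 (a - c - l * (a + c)); have := sqr_ge0 (b - d - l * (b + d)).
rewrite !expr2 => *; nra.
Qed.

Section Run.
Variables (A : Type) (M : qfa A).
Hypothesis disjoint_acc_rej : [disjoint qfa_acc M & qfa_rej M].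
Local Notation k := (qfa_k M).
Local Notation sqnorm := (sqnorm (M:=M)).
Local Notation projS := (projS (M:=M)).
Local Notation next U v := (projS (qfa_non M) (U *m v)).

Lemma sqnorm_ge0 v : 0 <= sqnorm v.
Proof. by apply: sumr_ge0 => i _; apply: sqmod_ge0. Qed.

Lemma sqmod_le_sqnorm (v : 'cV[CC]_k) i : sqmod (v i 0) <= sqnorm v.
Proof. by rewrite /sqnorm (bigD1 i) //= lerDl sumr_ge0 // => j _; apply: sqmod_ge0. Qed.

Lemma sqnormD_le v w : sqnorm (v + w) <= 2 * sqnorm v + 2 * sqnorm w.
Proof.
rewrite /sqnorm !mulr_sumr -big_split /=.
by apply: ler_sum => i _; rewrite mxE; apply: sqmodD_le.
Qed.

Lemma sqnormB_le (l : RR) v w :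
  2 * l * (sqnorm v - sqnorm w) <= sqnorm (v - w) + l ^+ 2 * sqnorm (v + w).
Proof.
rewrite /sqnorm -sumrB !mulr_sumr -big_split /=.
by apply: ler_sum => i _; rewrite !mxE; apply: sqmodB_le.
Qed.

Lemma sqnorm_unitary (U : 'M[CC]_k) v : unitary U -> sqnorm (U *m v) = sqnorm v.
Proof.
pose adj (w : 'cV[CC]_k) := (map_mx (@conjc RR) w)^T.
have adjE w : (adj w *m w) 0 0 = (sqnorm w)%:C.
  by rewrite !mxE rmorph_sum; apply: eq_bigr => i _; rewrite !mxE mul_conjc_sqmod.
move=> /mulmx1C UU; have : (adj (U *m v) *m (U *m v)) 0 0 = (adj v *m v) 0 0.
  by rewrite /adj map_mxM trmx_mul -mulmxA (mulmxA (adjmx U)) UU mul1mx.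
by rewrite !adjE => -[].
Qed.

Lemma projSD S v w : projS S (v + w) = projS S v + projS S w.
Proof. by apply/matrixP => i j; rewrite !mxE; case: (i \in S); rewrite ?addr0. Qed.

Lemma projSB S v w : projS S (v - w) = projS S v - projS S w.
Proof. by apply/matrixP => i j; rewrite !mxE; case: (i \in S); rewrite ?subr0. Qed.

Lemma sqnorm_measure_le v :
  sqnorm (projS (qfa_non M) v) + sqnorm (projS (qfa_acc M) v)
    + sqnorm (projS (qfa_rej M) v) <= sqnorm v.
Proof.
rewrite /sqnorm -!big_split /=; apply: ler_sum => i _.
rewrite !mxE /qfa_non in_setC in_setU.
have [iA|iA] := boolP (i \in qfa_acc M).
  by rewrite (disjointFr disjoint_acc_rej iA) /= sqmod0 add0r addr0.
by case: (i \in qfa_rej M); rewrite /= ?sqmod0 ?add0r ?addr0.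
Qed.

Lemma sqnorm_le_coord (v : 'cV[CC]_k) (gam : RR) :
  (forall i, `|complex.Re (v i 0)| < gam /\ `|complex.Im (v i 0)| < gam) ->
  sqnorm v <= k%:R * (2 * gam ^+ 2).
Proof.
move=> small; apply: le_trans (_ : \sum_(i < k) 2 * gam ^+ 2 <= _); last first.
  by rewrite sumr_const card_ord (mulr_natl _ k).
apply: ler_sum => i _; have [] := small i; rewrite /sqmod !ltr_norml.
have := normr_ge0 (complex.Re (v i 0)); move: (complex.Re _) (complex.Im _) => a b.
rewrite !expr2 => *; nra.
Qed.

Definition basis_cv (q : 'I_k) : 'cV[CC]_k := \col_i (i == q)%:R.

Lemma sqnorm_basis q : sqnorm (basis_cv q) = 1.
Proof.
rewrite /sqnorm (bigD1 q) //= !mxE eqxx sqmod1 big1 ?addr0 // => i /negbTE ni.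
by rewrite !mxE ni sqmod0.
Qed.

Lemma sqnorm0 : sqnorm (0 : 'cV[CC]_k) = 0.
Proof. by rewrite /sqnorm big1 // => i _; rewrite mxE sqmod0. Qed.

Lemma projS_basis S q : projS S (basis_cv q) = if q \in S then basis_cv q else 0.
Proof.
apply/matrixP => i j; rewrite !mxE.
have [->|/negbTE ni] := eqVneq i q; first by case: (q \in S); rewrite ?mxE ?eqxx.
by case: (i \in S); case: (q \in S); rewrite ?mxE ?ni.
Qed.

Fixpoint acc_from (v : 'cV[CC]_k) (Us : seq 'M[CC]_k) : RR :=
  if Us is U :: Us' then sqnorm (projS (qfa_acc M) (U *m v)) + acc_from (next U v) Us'
  else 0.

Fixpoint rej_from (v : 'cV[CC]_k) (Us : seq 'M[CC]_k) : RR :=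
  if Us is U :: Us' then sqnorm (projS (qfa_rej M) (U *m v)) + rej_from (next U v) Us'
  else 0.

Fixpoint state_from (v : 'cV[CC]_k) (Us : seq 'M[CC]_k) : 'cV[CC]_k :=
  if Us is U :: Us' then state_from (next U v) Us' else v.

Lemma foldl_qfa_step st Us : foldl (@qfa_step _ M) st Us =
  (state_from st.1.1 Us, st.1.2 + acc_from st.1.1 Us, st.2 + rej_from st.1.1 Us).
Proof.
case: st => -[v a] r; elim: Us v a r => [|U Us IH] v a r /=; first by rewrite !addr0.
by rewrite IH !addrA.
Qed.

Lemma acc_from_ge0 v Us : 0 <= acc_from v Us.
Proof. by elim: Us v => [|U Us IH] v //=; rewrite addr_ge0 ?sqnorm_ge0. Qed.

Lemma rej_from_ge0 v Us : 0 <= rej_from v Us.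
Proof. by elim: Us v => [|U Us IH] v //=; rewrite addr_ge0 ?sqnorm_ge0. Qed.

Lemma sqnorm_from_le v Us : {in Us, forall U, unitary U} ->
  sqnorm (state_from v Us) + acc_from v Us + rej_from v Us <= sqnorm v.
Proof.
elim: Us v => [|U Us IH] v /=; first by rewrite !addr0.
move=> /forall_cons[uU uUs]; have := IH (next U v) uUs.
have := sqnorm_measure_le (U *m v); rewrite sqnorm_unitary //.
lra.
Qed.

Lemma acc_fromB_le (l : RR) v w Us : {in Us, forall U, unitary U} ->
  2 * l * (acc_from v Us - acc_from w Us) <= sqnorm (v - w) + l ^+ 2 * sqnorm (v + w).
Proof.
elim: Us v w => [|U Us IH] v w /=.
  by move=> _; rewrite subrr mulr0 addr_ge0 ?sqnorm_ge0 // mulr_ge0 ?sqr_ge0 ?sqnorm_ge0.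
move=> /forall_cons[uU uUs]; have {IH} := IH (next U v) (next U w) uUs.
have := sqnormB_le l (projS (qfa_acc M) (U *m v)) (projS (qfa_acc M) (U *m w)).
rewrite -!projSB -!projSD -mulmxBr -mulmxDr.
have split_le x : sqnorm (next U x) + sqnorm (projS (qfa_acc M) (U *m x)) <= sqnorm x.
  rewrite -(sqnorm_unitary x uU); apply: le_trans (sqnorm_measure_le _).
  by rewrite lerDl sqnorm_ge0.
have := ler_wpM2l (sqr_ge0 l) (split_le (v + w)); have := split_le (v - w).
lra.
Qed.
End Run.

Section Discretization.
Variable gam : RR.
Hypothesis gam_gt0 : 0 < gam.

Definition cell (c : RR) : 'I_(Num.truncn (2 / gam)).+1 := inord (Num.truncn ((c + 1) / gam)).

Lemma cell_inj_close c c' : -1 <= c <= 1 -> -1 <= c' <= 1 ->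
  cell c = cell c' -> `|c - c'| < gam.
Proof.
have scaled_itv x : -1 <= x <= 1 ->
    0 <= (x + 1) / gam /\ (Num.truncn ((x + 1) / gam) < (Num.truncn (2 / gam)).+1)%N.
  move=> /andP[x_ge x_le]; split; first by apply: divr_ge0; [lra | exact: ltW].
  by rewrite ltnS le_truncn // ler_pM2r ?invr_gt0 //; lra.
move=> /scaled_itv[y0 yB] /scaled_itv[y0' yB'] /(congr1 val); rewrite /= !inordK //.
have /andP[t_le t_gt] := truncn_itv y0; have /andP[t_le' t_gt'] := truncn_itv y0'.
move=> tE; rewrite tE in t_le t_gt.
have -> : c - c' = gam * ((c + 1) / gam - (c' + 1) / gam) by field; rewrite gt_eqF.
rewrite normrM gtr0_norm // gtr_pMr // ltr_norml.
move: t_le t_gt t_le' t_gt'; rewrite -natr1; lra.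
Qed.

Lemma pigeonhole_close (U I : finType) (f : U -> I -> RR) :
  (forall u i, -1 <= f u i <= 1) ->
  (#|{ffun I -> 'I_(Num.truncn (2 / gam)).+1}| < #|U|)%N ->
  exists u u', u != u' /\ forall i, `|f u i - f u' i| < gam.
Proof.
move=> f_itv card_lt.
have /injectivePn[u [u' neq_uu' cellE]] :
    ~~ injectiveb (fun u => [ffun i => cell (f u i)]).
  by apply/injectiveP => /leq_card; rewrite leqNgt card_lt.
exists u, u'; split=> // i; apply: cell_inj_close => //.
by have /ffunP/(_ i) := cellE; rewrite !ffunE.
Qed.
End Discretization.

Section DeterministicAdvice.
Variables (G : finType) (M : qfa (bool * G)) (h : forall n, n.-tuple G).
Hypothesis M_wf : qfa_wf M.
Local Notation k := (qfa_k M).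

Definition prefix_run m (u : seq bool) :=
  foldl (@qfa_step _ M) (qfa_init M, 0, 0)
    (qfa_Ucent M :: map (qfa_Usym M) (zip u (take m (h (m + m))))).

Definition suffix_ops m (v : seq bool) :=
  rcons (map (qfa_Usym M) (zip v (drop m (h (m + m))))) (qfa_Udollar M).

Lemma qfa_run_cat m u v : size u = m -> size v = m ->
  qfa_run M (track2 (u ++ v) (h (size (u ++ v)))) =
  foldl (@qfa_step _ M) (prefix_run m u) (suffix_ops m v).
Proof.
move=> su sv; rewrite size_cat su sv /qfa_run /track2.
rewrite -{1}(cat_take_drop m (h (m + m))) zip_cat; last first.
  by rewrite su size_take size_tuple ltn_neqAle leq_addr andbT; case: (m =P m + m).
by rewrite map_cat rcons_cat -cat_cons foldl_cat.
Qed.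

Lemma prefix_run_bounds m u (st := prefix_run m u) :
  [/\ 0 <= st.1.2, 0 <= st.2 & sqnorm st.1.1 + st.1.2 + st.2 <= 1].
Proof.
have [uC _ uS dis] := M_wf.
rewrite /st /prefix_run foldl_qfa_step !add0r.
split; [exact: acc_from_ge0 | exact: rej_from_ge0 | rewrite -(sqnorm_basis (qfa_q0 M))].
by apply: sqnorm_from_le => // U /predU1P[-> //|/mapP[p _ ->]].
Qed.

Lemma suffix_ops_unitary m v : {in suffix_ops m v, forall U, unitary U}.
Proof.
have [_ uD uS _] := M_wf.
by move=> U; rewrite mem_rcons => /predU1P[-> //|/mapP[p _ ->]].
Qed.

Lemma prefix_collision (gam : RR) : 0 < gam -> exists m (u u' : seq bool),
  [/\ size u = m, size u' = m, u != u',
      `|(prefix_run m u).1.2 - (prefix_run m u').1.2| < gam &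
      sqnorm ((prefix_run m u).1.1 - (prefix_run m u').1.1) <= k%:R * (2 * gam ^+ 2)].
Proof.
move=> gam_gt0; set m := #|{ffun option ('I_k * bool) -> 'I_(Num.truncn (2 / gam)).+1}|.
pose coord (u : m.-tuple bool) (o : option ('I_k * bool)) : RR :=
  let st := prefix_run m u in
  if o is Some (i, b) then
    if b then complex.Re (st.1.1 i 0) else complex.Im (st.1.1 i 0)
  else st.1.2.
have coord_itv u o : -1 <= coord u o <= 1.
  have [acc_ge0 rej_ge0 norm_le] := prefix_run_bounds m u.
  have := sqnorm_ge0 (prefix_run m u).1.1.
  case: o => [[i b]|] /=; last by move=> *; apply/andP; split; lra.
  have := sqmod_le_sqnorm (prefix_run m u).1.1 i; rewrite /sqmod.
  by case: b; move: (complex.Re _) (complex.Im _) => a c *; apply/andP; split; nra.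
have [|u [u' [neq_uu' close]]] := pigeonhole_close gam_gt0 coord_itv.
  by rewrite card_tuple card_bool ltn_expl.
exists m, u, u'; split; rewrite ?size_tuple //; first by have := close None.
apply: sqnorm_le_coord => i; rewrite !mxE.
have := close (Some (i, true)); have := close (Some (i, false)); rewrite /coord /=.
by case: ((prefix_run m u).1.1 i 0) => a b; case: ((prefix_run m u').1.1 i 0).
Qed.
End DeterministicAdvice.

(* The language of words [w w]; for odd lengths the middle letter is ignored. *)
Definition Leq : pred (seq bool) :=
  fun x => take (size x)./2 x == drop (size x - (size x)./2) x.

Lemma Leq_cat u v : size u = size v -> Leq (u ++ v) = (u == v).
Proof.
move=> uv; rewrite /Leq size_cat -uv addnn doubleK -addnn addnK.
by rewrite take_size_cat // drop_size_cat.
Qed.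

Lemma Leq_notin_1QFA_n : ~ in_1QFA_n Leq.
Proof.
case=> G [M [eps [h [M_wf _ eps_lt correct]]]].
have [_ _ _ dis] := M_wf.
pose d := 1 - 2 * eps; pose K : RR := (qfa_k M)%:R; pose gam := d / (8 * (K + 1)).
have d_gt0 : 0 < d by rewrite /d; lra.
have K_ge0 : 0 <= K by rewrite ler0n.
have gamE : gam * (8 * (K + 1)) = d by rewrite /gam mulfVK // gt_eqF //; lra.
have gam_gt0 : 0 < gam by rewrite divr_gt0 //; lra.
have [m [u [u' [su su' neq_uu' accA_close dist]]]] := prefix_collision h M_wf gam_gt0.
set st := prefix_run M h m u in accA_close dist.
set st' := prefix_run M h m u' in accA_close dist.
set Us := suffix_ops M h m u.
have accept : 1 - eps <= st.1.2 + acc_from st.1.1 Us.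
  have := correct (u ++ u).
  rewrite Leq_cat // eqxx /out_prob /acc_prob.
  by rewrite (@qfa_run_cat _ M h m _ _ su su) foldl_qfa_step.
have reject : 1 - eps <= st'.2 + rej_from st'.1.1 Us.
  have := correct (u' ++ u); rewrite Leq_cat ?su ?su' // eq_sym (negbTE neq_uu').
  by rewrite /out_prob /rej_prob (@qfa_run_cat _ M h m _ _ su' su) foldl_qfa_step.
have Us_unitary : {in Us, forall U, unitary U} by apply: suffix_ops_unitary.
have conserve := sqnorm_from_le dis st'.1.1 Us_unitary.
have [A_ge0 R_ge0 st_le] := prefix_run_bounds h M_wf m u.
have [A_ge0' R_ge0' st_le'] := prefix_run_bounds h M_wf m u'.
have gap : d - gam < acc_from st.1.1 Us - acc_from st'.1.1 Us.
  move: accA_close conserve (sqnorm_ge0 (state_from st'.1.1 Us)).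
  by rewrite ltr_norml /d; lra.
have sum_le : sqnorm (st.1.1 + st'.1.1) <= 4.
  have := sqnormD_le st.1.1 st'.1.1; have := sqnorm_ge0 st.1.1.
  have := sqnorm_ge0 st'.1.1; lra.
have dist_le : sqnorm (st.1.1 - st'.1.1) <= gam * d / 4.
  apply: le_trans dist _; rewrite -gamE; nra.
have gam_le : gam <= d / 8 by rewrite -gamE; nra.
(* [2 (d/8) (d - gam) < gam d / 4 + (d/8)^2 4] forces [3 d < 8 gam]. *)
have := acc_fromB_le dis (d / 8) st.1.1 st'.1.1 Us_unitary.
have := ler_wpM2l (sqr_ge0 (d / 8)) sum_le.
by move: gap dist_le; move: (acc_from _ _ - acc_from _ _) => a *; nra.
Qed.

Section Weight.
Variable V : zmodType.
Implicit Types (u v : seq bool) (s t : seq V).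

Definition weight (w : seq (bool * V)) : V := \sum_(p <- w) if p.1 then p.2 else 0.

Lemma weight_zip_cat u v s t : size u = size s ->
  weight (zip (u ++ v) (s ++ t)) = weight (zip u s) + weight (zip v t).
Proof. by move=> us; rewrite /weight zip_cat // big_cat. Qed.

Lemma weight_zip_nseq0 u n : weight (zip u (nseq n (0 : V))) = 0.
Proof.
elim: u n => [|b u IH] [|n] //; rewrite /weight ?big_nil //.
by rewrite big_cons -/(weight _) IH; case: b; rewrite addr0.
Qed.

Lemma weight_zip_opp u s : weight (zip u (map -%R s)) = - weight (zip u s).
Proof.
elim: u s => [|b u IH] [|x s]; rewrite /weight ?big_nil ?oppr0 //.
by rewrite !big_cons -!/(weight _) IH opprD; case: b; rewrite ?oppr0.
Qed.

Lemma weight_zip_codom m u (t : {ffun 'I_m -> V}) : size u = m ->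
  weight (zip u (codom t)) = \sum_(j < m) t j *+ nth false u j.
Proof.
move=> um; have -> : u = [seq nth false u j | j : 'I_m <- enum 'I_m].
  by rewrite -{1}(mkseq_nth false u) um /mkseq -val_enum_ord -map_comp.
rewrite codomE zip_map /weight big_map big_enum /=; apply: eq_bigr => j _.
by rewrite (nth_map j) ?size_enum_ord // nth_ord_enum; case: nth.
Qed.
End Weight.

Definition shift_mx (c : 'I_6) : 'M[CC]_6 := (perm_mx (perm (addrI c)))^T.

Lemma shift_mx_unitary c : unitary (shift_mx c).
Proof.
rewrite /unitary /adjmx /shift_mx map_trmx trmxK (map_perm_mx (@conjc RR)).
by rewrite tr_perm_mx -perm_mxM mulVg perm_mx1.
Qed.

Definition twice (a : 'I_3) : 'I_6 := inZp (2 * a).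

Lemma twiceD a b : twice (a + b) = twice a + twice b.
Proof. by apply: val_inj; case: a => [[|[|[|//]]] ?]; case: b => [[|[|[|//]]] ?]. Qed.

Definition halt_acc : {set 'I_6} := [set inZp 1].
Definition halt_rej : {set 'I_6} := [set inZp 3; inZp 5].

(* The inner state [twice s] records the weight [s] read so far; the right
   endmarker moves it to the odd states, among which only [1] accepts. *)
Definition weight_qfa : qfa (bool * 'I_3) :=
  @QFA _ 6 (twice 0) (shift_mx (twice 0)) (shift_mx 1)
    (fun p => shift_mx (twice (if p.1 then p.2 else 0))) halt_acc halt_rej.

Lemma weight_qfa_wf : qfa_wf weight_qfa.
Proof.
split=> [||p|]; try exact: shift_mx_unitary.
rewrite disjoint_subset; apply/subsetP => i; rewrite !inE.
by case: i => [[|[|[|[|[|[|//]]]]]] ?].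
Qed.

Local Notation basis := (basis_cv (M:=weight_qfa)).

Lemma shift_mx_basis c q : shift_mx c *m basis q = basis (c + q).
Proof.
apply/matrixP => i j; rewrite !mxE (bigD1 q) //= big1 ?addr0.
  by rewrite !mxE eqxx mulr1 permE eq_sym.
by move=> p /negbTE np; rewrite !mxE np mulr0.
Qed.

Lemma weight_qfa_step s c pa pr :
  qfa_step (basis (twice s), pa, pr) (shift_mx (twice c)) = (basis (twice (c + s)), pa, pr).
Proof.
rewrite /qfa_step shift_mx_basis -twiceD !projS_basis /qfa_non /=.
have [-> -> ->] : [/\ twice (c + s) \in ~: (halt_acc :|: halt_rej),
    twice (c + s) \in halt_acc = false & twice (c + s) \in halt_rej = false].
  by case: (c + s) => [[|[|[|//]]] ?]; rewrite !inE.
by rewrite !sqnorm0 !addr0.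
Qed.

Lemma weight_qfa_syms w :
  foldl (@qfa_step _ weight_qfa) (qfa_init weight_qfa, 0, 0) (map (qfa_Usym weight_qfa) w)
  = (basis (twice (weight w)), 0, 0).
Proof.
elim/last_ind: w => [|w p IH]; first by rewrite /weight big_nil.
by rewrite map_rcons foldl_rcons IH weight_qfa_step /weight big_rcons /= addrC.
Qed.

Lemma weight_qfa_out b w : out_prob weight_qfa b w = (b == (weight w == 0))%:R.
Proof.
have Ucent_sym : qfa_Ucent weight_qfa = qfa_Usym weight_qfa (false, 0) by [].
rewrite /out_prob /acc_prob /rej_prob /qfa_run Ucent_sym -rcons_cons -map_cons.
rewrite foldl_rcons weight_qfa_syms /qfa_step shift_mx_basis !projS_basis /= !add0r.
have -> : weight ((false, 0) :: w) = weight w by rewrite /weight big_cons add0r.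
by case: (weight w) b => [[|[|[|//]]] ?] [];
  rewrite !inE /= ?sqnorm_basis ?sqnorm0.
Qed.

Lemma Z3_orbit_partition (x c : 'I_3) : c != 0 ->
  ((x == 0)%R + (x == - c)%R + (x == - c - c)%R = 1)%N.
Proof. by case: x => [[|[|[|//]]] ?]; case: c => [[|[|[|//]]] ?]. Qed.

(* Bumping [t j0] shifts the form by [c j0], so its three level sets have the same size. *)
Lemma card_kernel_Z3 m (c : 'I_m -> 'I_3) j0 : c j0 != 0 ->
  (3 * \sum_(t : {ffun 'I_m -> 'I_3}) (\sum_j t j * c j == 0)%R = 3 ^ m)%N.
Proof.
move=> c_nz; pose S (t : {ffun 'I_m -> 'I_3}) := \sum_j t j * c j.
pose N v := (\sum_t (S t == v) : nat)%N.
pose bump (t : {ffun 'I_m -> 'I_3}) := [ffun j => t j + (j == j0)%:R].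
have S_bump t : S (bump t) = S t + c j0.
  rewrite /S (bigD1 j0) //= [in RHS](bigD1 j0) //= ffunE eqxx mulrDl mul1r.
  rewrite -!addrA [c j0 + _]addrC; congr (_ + (_ + _)); apply: eq_bigr => j /negbTE nj.
  by rewrite ffunE nj addr0.
have bump_inj : injective bump.
  by move=> t t' /ffunP tt'; apply/ffunP => j; have := tt' j; rewrite !ffunE => /addIr.
have N_bump v : N v = N (v - c j0).
  rewrite /N (reindex_inj bump_inj); apply: eq_bigr => t _.
  by rewrite S_bump -(inj_eq (addIr (c j0)) (S t)) subrK.
have -> : (3 * N 0%R = N 0%R + N (0 - c j0)%R + N (0 - c j0 - c j0)%R)%N.
  by rewrite -!N_bump !mulSn mul0n addn0 addnA.
rewrite sub0r /N -!big_split /= (eq_bigr (fun=> 1%N)) => [|t _].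
  by rewrite sum1_card card_ffun !card_ord.
exact: Z3_orbit_partition.
Qed.

Section UniformImage.
Variables (T U : finType) (f : T -> U).

Definition uniform_image : {ffun U -> RR} :=
  [ffun u => \sum_t (f t == u)%:R / #|T|%:R].

Lemma uniform_image_expect (P : U -> RR) :
  \sum_u uniform_image u * P u = (\sum_t P (f t)) / #|T|%:R.
Proof.
under eq_bigr do rewrite ffunE mulr_suml.
rewrite exchange_big mulr_suml; apply: eq_bigr => t _.
rewrite (bigD1 (f t)) //= eqxx big1 ?addr0; first by rewrite mul1r mulrC.
by move=> u /negbTE nu; rewrite eq_sym nu !mul0r.
Qed.

Lemma uniform_image_distr : (0 < #|T|)%N ->
  (forall u, 0 <= uniform_image u) /\ \sum_u uniform_image u = 1.
Proof.
move=> T_gt0; split=> [u|].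
  by rewrite ffunE; apply: sumr_ge0 => t _; rewrite divr_ge0 ?ler0n.
under eq_bigr do rewrite -[uniform_image _]mulr1.
by rewrite uniform_image_expect sumr_const -mulr_natr mul1r divff // pnatr_eq0 -lt0n.
Qed.
End UniformImage.

Definition twin_advice_seq n (t : {ffun 'I_n./2 -> 'I_3}) : seq 'I_3 :=
  codom t ++ nseq (odd n) 0 ++ map -%R (codom t).

Lemma size_twin_advice_seq n (t : {ffun 'I_n./2 -> 'I_3}) :
  size (twin_advice_seq t) == n.
Proof.
rewrite !size_cat size_nseq size_codom size_map size_codom card_ord.
by rewrite -{4}(odd_double_half n) -addnn; apply/eqP; lia.
Qed.

Definition twin_advice n (t : {ffun 'I_n./2 -> 'I_3}) : n.-tuple 'I_3 :=
  Tuple (size_twin_advice_seq t).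

Definition twin_advice_distr n := uniform_image (@twin_advice n).

Lemma exists_nth_neq (a b : seq bool) m : size a = m -> size b = m -> a != b ->
  exists j : 'I_m, nth false a j != nth false b j.
Proof.
move=> am bm /eqP nab.
have [/existsP //|/existsPn nth_eq] := boolP [exists j : 'I_m, nth false a j != nth false b j].
case: nab; apply: (@eq_from_nth _ false) => [|j]; first by rewrite am bm.
by rewrite am => jm; apply/eqP; exact: negbNE (nth_eq (Ordinal jm)).
Qed.

Section TwinAdvice.
Variable x : seq bool.
Local Notation n := (size x).
Local Notation m := (size x)./2.
Local Notation coeff j :=
  ((nth false (take m x) j)%:R - (nth false (drop (n - m) x) j)%:R : 'I_3).

Lemma half_le : (m <= n)%N.
Proof. by rewrite -{2}(odd_double_half n) -addnn; lia. Qed.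

Lemma weight_twin_advice (t : {ffun 'I_m -> 'I_3}) :
  weight (track2 x (twin_advice t)) = \sum_(j < m) t j * coeff j.
Proof.
have n_eq : n = (m + odd n + m)%N by rewrite -{1}(odd_double_half n) -addnn; lia.
rewrite /track2 /= /twin_advice_seq -{1}(cat_take_drop m x).
rewrite -(cat_take_drop (odd n) (drop m x)) drop_drop.
have -> : (odd n + m = n - m)%N by lia.
have := half_le => m_le.
rewrite !weight_zip_cat ?size_takel ?size_codom ?card_ord ?size_nseq ?size_drop //; try lia.
rewrite weight_zip_nseq0 weight_zip_opp !weight_zip_codom ?size_takel ?size_drop //; try lia.
by rewrite add0r -sumrB; apply: eq_bigr => j _; rewrite mulrBr !mulr_natr.
Qed.

Lemma weight_twin_advice_Leq (t : {ffun 'I_m -> 'I_3}) :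
  Leq x -> weight (track2 x (twin_advice t)) = 0.
Proof.
move=> /eqP halves; rewrite weight_twin_advice big1 // => j _.
by rewrite halves subrr mulr0.
Qed.

Lemma weight_twin_advice_notLeq : ~~ Leq x ->
  (3 * \sum_(t : {ffun 'I_m -> 'I_3}) (weight (track2 x (twin_advice t)) == 0)%R = 3 ^ m)%N.
Proof.
move=> halves; have [j0 neq_j0] : exists j0 : 'I_m,
    nth false (take m x) j0 != nth false (drop (n - m) x) j0.
  have := half_le => m_le.
  by apply: exists_nth_neq halves; rewrite ?size_takel ?size_drop ?subKn.
pose c (j : 'I_m) := coeff j.
have c_nz : c j0 != 0 by move: neq_j0; rewrite /c; do 2 case: nth.
rewrite -(card_kernel_Z3 c_nz); congr (3 * _)%N.
by apply: eq_bigr => t _; rewrite weight_twin_advice.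
Qed.
End TwinAdvice.

Lemma Leq_in_1QFA_Rn : in_1QFA_Rn Leq.
Proof.
exists ('I_3 : finType), weight_qfa, (1 / 3), twin_advice_distr.
have card_T n : #|{ffun 'I_n./2 -> 'I_3}| = (3 ^ n./2)%N by rewrite card_ffun !card_ord.
have T_gt0 n : (0 : RR) < (3 ^ n./2)%N%:R by rewrite ltr0n expn_gt0.
split=> [||||x]; first exact: weight_qfa_wf; try lra.
  by move=> n; apply: uniform_image_distr; rewrite card_T expn_gt0.
rewrite uniform_image_expect card_T; under eq_bigr do rewrite weight_qfa_out.
have [Lx|nLx] := boolP (Leq x).
  under eq_bigr do rewrite weight_twin_advice_Leq // !eqxx.
  by rewrite sumr_const card_T divff ?gt_eqF //; lra.
have := weight_twin_advice_notLeq nLx => /(congr1 (GRing.natmul (1 : RR))).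
rewrite natrM; set N : RR := (\sum_t _)%:R => kernel.
have N_gt0 : 0 < N by have := T_gt0 (size x); rewrite -kernel; lra.
rewrite (eq_bigr (fun t => 1 - (weight (track2 x (twin_advice t)) == 0)%:R)); last first.
  by move=> t _; case: (weight _ == 0); rewrite ?subrr ?subr0.
rewrite sumrB sumr_const card_T -natr_sum -/N -kernel.
by rewrite [X in _ <= X](_ : _ = 1 - 1 / 3) //; field; rewrite gt_eqF.
Qed.

Theorem corollary5p3 :
  exists (S : finType) (L : pred (seq S)), ~ (in_1QFA_n L <-> in_1QFA_Rn L).
Proof.
exists bool, Leq => -[_ Rn_to_n].
exact: Leq_notin_1QFA_n (Rn_to_n Leq_in_1QFA_Rn).
Qed.
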